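(* In the setting described in the context, $V$ is an irreducible $\mathcal U$-module on which the generators act as follows: $y^+_0$ acts as $a^{-1}A$, $y^+_1$ as $a^{*-1}A^*$, $y^-_0$ as $b^{*-1}B^*$, $y^-_1$ as $b^{-1}B$, $k_0$ as $K^*$, $k_1$ as $K^{*-1}$, $k_0^{-1}$ as $K^{*-1}$, and $k_1^{-1}$ as $K^*$.
   Context: $\mathbb K$ is an algebraically closed field, $q\in\mathbb K$ nonzero and not a root of unity, $[3]_q=\frac{q^3-q^{-3}}{q-q^{-1}}$, $V$ a nonzero finite-dimensional $\mathbb K$-vector space. $\mathcal U$ (isomorphic to $U_q(\widehat{sl}_2)$) is the unital associative $\mathbb K$-algebra with generators $y^{\pm}_i,k_i^{\pm1}$ ($i\in\{0,1\}$) and relations: $k_ik_i^{-1}=k_i^{-1}k_i=1$; $k_0k_1$ central; $\frac{qy^+_ik_i-q^{-1}k_iy^+_i}{q-q^{-1}}=1$; $\frac{qk_iy^-_i-q^{-1}y^-_ik_i}{q-q^{-1}}=1$; $\frac{qy^-_iy^+_i-q^{-1}y^+_iy^-_i}{q-q^{-1}}=1$; $\frac{qy^+_iy^-_j-q^{-1}y^-_jy^+_i}{q-q^{-1}}=k_0^{-1}k_1^{-1}$ ($i\ne j$); $(y^{\pm}_i)^3y^{\pm}_j-[3]_q(y^{\pm}_i)^2y^{\pm}_jy^{\pm}_i+[3]_qy^{\pm}_iy^{\pm}_j(y^{\pm}_i)^2-y^{\pm}_j(y^{\pm}_i)^3=0$ ($i\ne j$). A tridiagonal pair on $V$ is an ordered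 pair $A,A^*$ of linear maps $V\to V$ such that: (i) each is diagonalizable; (ii) there is an ordering $V_0,\dots,V_d$ of the eigenspaces of $A$ with $A^*V_i\subseteq V_{i-1}+V_i+V_{i+1}$ ($V_{-1}=V_{d+1}=0$); (iii) there is an ordering $V^*_0,\dots,V^*_\delta$ of the eigenspaces of $A^*$ with $AV^*_i\subseteq V^*_{i-1}+V^*_i+V^*_{i+1}$ ($V^*_{-1}=V^*_{\delta+1}=0$); (iv) no subspace $W\ne0,V$ satisfies $AW\subseteq W$, $A^*W\subseteq W$. It is known $d=\delta$; orderings as in (ii),(iii) are called standard. Setting: $A,A^*$ is a tridiagonal pair on $V$; $V_0,\dots,V_d$ (resp. $V^*_0,\dots,V^*_d$) is a standard ordering of the eigenspaces of $A$ (resp. $A^*$); the eigenvalue of $A$ on $V_i$ is $aq^{2i-d}$ and that of $A^*$ on $V^*_i$ is $a^*q^{d-2i}$ for nonzero $a,a^*\in\mathbb K$; $b,b^*\in\mathbb K$ nonzero. For $0\le i\le d$, each of the families $(V^*_0+\cdots+V^*_i)\cap(V_0+\cdots+V_{d-i})$, $(V^*_{d-i}+\cdots+V^*_d)\cap(V_i+\cdots+V_d)$, $(V^*_{d-i}+\cdots+V^*_d)\cap(V_0+\cdots+V_{d-i})$ is a decomposition of $V$ (nonzero subspaces, direct sum equal to $V$). $B$ acts as $bq^{2i-d}I$ on $(V^*_0+\cdots+V^*_i)\cap(V_0+\cdots+V_{d-i})$; $B^*$ acts as $b^*q^{d-2i}I$ on $(V^*_{d-i}+\cdots+V^*_d)\cap(V_i+\cdots+V_d)$;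 $K^*$ acts as $q^{2i-d}I$ on $(V^*_{d-i}+\cdots+V^*_d)\cap(V_0+\cdots+V_{d-i})$. *)

From HB Require Import structures.
From mathcomp Require Import all_boot all_order all_algebra.
Set Implicit Arguments. Unset Strict Implicit. Unset Printing Implicit Defensive.
Import Order.TTheory GRing.Theory Num.Theory.
Local Open Scope ring_scope.

(* Conventions: V = 'rV[K]_n (row vectors), a linear map V -> V is a matrix
   M : 'M[K]_n acting by  v |-> v *m M. *)

Section Defs.
Variables (K : fieldType) (n : nat).
Implicit Types (A As : 'M[K]_n) (th : nat -> K).

(* Product X1 X2 ... Xk in the algebra, as an operator on V:
   (X1 X2 ... Xk) . v = X1 . (X2 . ( ... (Xk . v))) = v *m Xk *m ... *m X1 *)
Definition word (s : seq 'M[K]_n) : 'M[K]_n :=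
  foldr (fun X acc => acc *m X) 1%:M s.

Definition standard_ordering A As (d : nat) th : Prop :=
  [/\ (forall i j, (i <= d)%N -> (j <= d)%N -> th i = th j -> i = j),
      (forall i, (i <= d)%N -> eigenvalue A (th i)),
      (forall x, eigenvalue A x -> exists2 i, (i <= d)%N & x = th i) &
      (forall i, (i <= d)%N ->
         (eigenspace A (th i) *m As <=
            (if i is i'.+1 then eigenspace A (th i') else 0)
            + eigenspace A (th i)
            + (if (i < d)%N then eigenspace A (th i.+1) else 0))%MS)].

Definition TD_pair A As : Prop :=
  [/\ (0 < n)%N, diagonalizable A /\ diagonalizable As,
      (exists d th, standard_ordering A As d th),
      (exists d th, standard_ordering As A d th) &
      (forall W : 'M[K]_n, stablemx W A -> stablemx W As ->
         W = 0 \/ (W == 1%:M)%MS)].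

Definition is_decomposition (d : nat) (W : nat -> 'M[K]_n) : Prop :=
  [/\ (forall i, (i <= d)%N -> W i != 0),
      mxdirect (\sum_(i < d.+1) W i) &
      (\sum_(i < d.+1) W i == 1%:M)%MS].

Definition acts_as_scalar (d : nat) (W : nat -> 'M[K]_n) (c : nat -> K)
    (M : 'M[K]_n) : Prop :=
  forall i, (i <= d)%N -> forall v : 'rV[K]_n, (v <= W i)%MS ->
    v *m M = c i *: v.

(* The assignment y^+_0 |-> y0p, y^+_1 |-> y1p, y^-_0 |-> y0m, y^-_1 |-> y1m,
   k_0 |-> k0, k_1 |-> k1, k_0^{-1} |-> k0i, k_1^{-1} |-> k1i
   satisfies the defining relations of U, i.e. defines a U-module structure
   on V.  Index false stands for 0 and true for 1. *)
Definition Urep (q : K) (y0p y1p y0m y1m k0 k1 k0i k1i : 'M[K]_n) : Prop :=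
  let yp (i : bool) := if i then y1p else y0p in
  let ym (i : bool) := if i then y1m else y0m in
  let k (i : bool) := if i then k1 else k0 in
  let ki (i : bool) := if i then k1i else k0i in
  let c := (q - q^-1)^-1 in
  let q3 := (q ^+ 3 - q ^- 3) / (q - q^-1) in
  [/\ (forall i, word [:: k i; ki i] = 1%:M /\ word [:: ki i; k i] = 1%:M)
      /\ (forall X, X \in [:: y0p; y1p; y0m; y1m; k0; k1; k0i; k1i] ->
         word [:: k0; k1; X] = word [:: X; k0; k1]),
      (forall i, c *: (q *: word [:: yp i; k i] - q^-1 *: word [:: k i; yp i])
                 = 1%:M),
      (forall i, c *: (q *: word [:: k i; ym i] - q^-1 *: word [:: ym i; k i])
                 = 1%:M)
      /\ (forall i, c *: (q *: word [:: ym i; yp i] - q^-1 *: word [:: yp i; ym i])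
                 = 1%:M),
      (forall i j, i != j ->
         c *: (q *: word [:: yp i; ym j] - q^-1 *: word [:: ym j; yp i])
         = word [:: k0i; k1i]) &
      (forall (y : bool -> 'M[K]_n) i j, (y = yp \/ y = ym) -> i != j ->
         word [:: y i; y i; y i; y j] - q3 *: word [:: y i; y i; y j; y i]
         + q3 *: word [:: y i; y j; y i; y i] - word [:: y j; y i; y i; y i]
         = 0)].

(* V is irreducible for the action of the given generators (V nonzero and
   no subspace other than 0 and V is stable under all of them, hence under
   the whole algebra they generate). *)
Definition irreducible_for (gens : seq 'M[K]_n) : Prop :=
  (0 < n)%N /\
  forall W : 'M[K]_n, (forall X, X \in gens -> stablemx W X) ->
    W = 0 \/ (W == 1%:M)%MS.

End Defs.

From HB Require Import structures.
From mathcomp Require Import all_boot all_order all_algebra.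
From mathcomp Require Import ring zify.
Import Order.TTheory GRing.Theory Num.Theory.
Local Open Scope ring_scope.

(* The decompositions W1, W2, W3 on which B, B^* and K^* act diagonally are each the
   intersection of a flag of eigenspaces of A with a flag of eigenspaces of A^*.  Since A
   is scalar on its own eigenspaces and tridiagonal on those of A^*, and vice versa,
   A - th and A^* - th^* shift each of these decompositions by one step.  A q-Weyl
   relation (qXY - q^-1 YX)/(q - q^-1) = 1 then holds block by block whenever Y is
   diagonal on a decomposition, X - lam_i moves the i-th block to a neighbour on which
   the eigenvalue of Y is q^2 times larger, and lam_i is the inverse of the eigenvalue
   of Y.  Conversely, a q-Weyl relation forces Y - t^-1 to map the t-eigenspace of X
   into its q^-2 t-eigenspace; applied to the relations already obtained, this makes
   K^*, B and B^* tridiagonal on the eigenspaces of A and A^*, which gives the last two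
   q-Weyl relations (through the flags of W3) and the tridiagonality on W1, W2 needed
   for the q-Serre relations.  These hold blockwise, neighbouring eigenvalues being
   roots of (t - c)(t - q^2 c)(t - q^-2 c).  Irreducibility is inherited from the
   tridiagonal pair, A and A^* being nonzero multiples of generators. *)

Set Implicit Arguments.
Unset Strict Implicit.

Section Subspaces.
Variables (F : fieldType) (n : nat).

Lemma eq_mulmx_spanning (I : finType) (P : pred I) (W : I -> 'M[F]_n) (M N : 'M_n) :
  (1%:M <= \sum_(i | P i) W i)%MS ->
  (forall i, P i -> W i *m M = W i *m N) -> M = N.
Proof.
move=> full eqW; apply/eqP; rewrite -subr_eq0 -submx0 -[M - N]mul1mx.
apply: submx_trans (submxMr _ full) _; rewrite sumsmxMr.
by apply/sumsmx_subP => i Pi; rewrite mulmxBr eqW ?subrr.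
Qed.

Lemma mulmx_capmx_sub m1 m2 m3 m4 (U : 'M[F]_(m1, n)) (V : 'M_(m2, n))
    (X : 'M_n) (U' : 'M_(m3, n)) (V' : 'M_(m4, n)) :
  (U *m X <= U')%MS -> (V *m X <= V')%MS -> ((U :&: V) *m X <= U' :&: V')%MS.
Proof.
move=> UX VX; rewrite sub_capmx.
by rewrite (submx_trans (submxMr _ (capmxSl _ _)) UX)
  (submx_trans (submxMr _ (capmxSr _ _)) VX).
Qed.

Lemma eigenspaceZ_sub m (S : 'M[F]_(m, n)) (M : 'M_n) (s x : F) : s != 0 ->
  (S <= eigenspace (s *: M) x)%MS -> (S <= eigenspace M (s^-1 * x))%MS.
Proof.
move=> s0 /eigenspaceP SM; apply/eigenspaceP; apply: (scalerI s0).
by rewrite scalemxAr SM !scalerA mulrA divff ?mul1r.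
Qed.

End Subspaces.

Section Flags.
Variables (F : fieldType) (n d : nat) (f : nat -> 'M[F]_n).

Local Notation pre m := (\sum_(j < m.+1) f j)%MS.
Local Notation suf m := (\sum_(m <= j < d.+1) f j)%MS.

Definition tridiagonal (Y : 'M[F]_n) := forall i, (i <= d)%N ->
  (f i *m Y <= (if i is i'.+1 then f i' else 0) + f i
               + (if (i < d)%N then f i.+1 else 0))%MS.

Definition raising (X : 'M[F]_n) (lam : nat -> F) := forall i, (i <= d)%N ->
  (f i *m (X - (lam i)%:M) <= if (i < d)%N then f i.+1 else 0)%MS.

Definition lowering (X : 'M[F]_n) (lam : nat -> F) := forall i, (i <= d)%N ->
  (f i *m (X - (lam i)%:M) <= if i is i'.+1 then f i' else 0)%MS.

Lemma suf_ord m : suf m = (\sum_(j < d.+1 | (m <= j)%N) f j)%MS.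
Proof. exact: big_geq_mkord. Qed.

Lemma pre_sup j m : (j <= m)%N -> (f j <= pre m)%MS.
Proof. by move=> ljm; apply: (sumsmx_sup (Ordinal (ljm : (j < m.+1)%N))). Qed.

Lemma suf_sup j m : (m <= j <= d)%N -> (f j <= suf m)%MS.
Proof.
by case/andP=> lmj ljd; rewrite suf_ord; apply: (sumsmx_sup (Ordinal (ljd : (j < d.+1)%N))).
Qed.

Lemma pre_mulmx_sub m k (M : 'M_n) (S : 'M_(k, n)) :
  (forall j, (j <= m)%N -> f j *m M <= S)%MS -> (pre m *m M <= S)%MS.
Proof.
move=> fMS; rewrite sumsmxMr; apply/sumsmx_subP => j _.
by apply: fMS; rewrite -ltnS.
Qed.

Lemma suf_mulmx_sub m k (M : 'M_n) (S : 'M_(k, n)) :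
  (forall j, (m <= j <= d)%N -> f j *m M <= S)%MS -> (suf m *m M <= S)%MS.
Proof.
move=> fMS; rewrite suf_ord sumsmxMr; apply/sumsmx_subP => j /= lmj.
by apply: fMS; rewrite lmj -ltnS ltn_ord.
Qed.

Lemma pre_sub m k (S : 'M_(k, n)) :
  (forall j, (j <= m)%N -> f j <= S)%MS -> (pre m <= S)%MS.
Proof.
by move=> fS; rewrite -[pre m]mulmx1; apply: pre_mulmx_sub => j /fS; rewrite mulmx1.
Qed.

Lemma suf_sub m k (S : 'M_(k, n)) :
  (forall j, (m <= j <= d)%N -> f j <= S)%MS -> (suf m <= S)%MS.
Proof.
by move=> fS; rewrite -[suf m]mulmx1; apply: suf_mulmx_sub => j /fS; rewrite mulmx1.
Qed.

Lemma pre_mono m m' : (m <= m')%N -> (pre m <= pre m')%MS.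
Proof. by move=> lm; apply: pre_sub => j ljm; apply: pre_sup (leq_trans ljm lm). Qed.

Lemma suf_anti m m' : (m' <= m)%N -> (suf m <= suf m')%MS.
Proof.
by move=> lm; apply: suf_sub => j /andP[lmj ljd]; apply: suf_sup; rewrite (leq_trans lm).
Qed.

Lemma suf_eq0 : suf d.+1 = 0.
Proof. exact: big_geq. Qed.

Lemma pre_mulmx_eigen (X : 'M_n) (lam : nat -> F) m : (m <= d)%N ->
  (forall j, (j <= d)%N -> f j *m X = lam j *: f j) ->
  (pre m *m (X - (lam m)%:M) <= if m is m'.+1 then pre m' else 0)%MS.
Proof.
move=> lmd fX; apply: pre_mulmx_sub => j ljm.
rewrite mulmxBr fX ?(leq_trans ljm) // mul_mx_scalar -scalerBl.
case: (ltngtP j m) ljm => [ltjm _|//|->]; last by rewrite subrr scale0r sub0mx.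
by case: m ltjm {lmd fX} => // m' ltjm; apply/scalemx_sub/pre_sup.
Qed.

Lemma suf_mulmx_eigen (X : 'M_n) (lam : nat -> F) m :
  (forall j, (j <= d)%N -> f j *m X = lam j *: f j) ->
  (suf m *m (X - (lam m)%:M) <= suf m.+1)%MS.
Proof.
move=> fX; apply: suf_mulmx_sub => j /andP[lmj ljd].
rewrite mulmxBr fX // mul_mx_scalar -scalerBl.
case: (ltngtP m j) lmj => [ltmj _|//|->]; last by rewrite subrr scale0r sub0mx.
by apply/scalemx_sub/suf_sup; rewrite ltmj.
Qed.

Lemma tridiagonal_sub (Y : 'M_n) i k (S : 'M_(k, n)) : tridiagonal Y -> (i <= d)%N ->
  ((if i is i'.+1 then f i' else 0) <= S)%MS -> (f i <= S)%MS ->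
  ((if (i < d)%N then f i.+1 else 0) <= S)%MS -> (f i *m Y <= S)%MS.
Proof.
move=> triY lid f1 f2 f3; apply: submx_trans (triY i lid) _.
by rewrite !addsmx_sub f1 f2 f3.
Qed.

Lemma pre_mulmx_tridiagonal (Y : 'M_n) m : tridiagonal Y -> (m <= d)%N ->
  (pre m *m Y <= pre m.+1)%MS.
Proof.
move=> triY lmd; apply: pre_mulmx_sub => j ljm.
apply: tridiagonal_sub; rewrite ?(leq_trans ljm) //.
- by case: j ljm => [|j] ljm; rewrite ?sub0mx //; apply: pre_sup; lia.
- by apply: pre_sup; lia.
- by case: ifP; rewrite ?sub0mx // => _; apply: pre_sup.
Qed.

Lemma suf_mulmx_tridiagonal (Y : 'M_n) m : tridiagonal Y ->
  (suf m *m Y <= suf m.-1)%MS.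
Proof.
move=> triY; apply: suf_mulmx_sub => j /andP[lmj ljd].
apply: tridiagonal_sub => //.
- by case: j lmj ljd => [|j] lmj ljd; rewrite ?sub0mx //; apply: suf_sup; lia.
- by apply: suf_sup; lia.
- by case: ifP; rewrite ?sub0mx // => ltjd; apply: suf_sup; lia.
Qed.

Lemma tridiagonal_shift (Y : 'M_n) (mu : F) : tridiagonal Y -> tridiagonal (Y - mu%:M).
Proof.
move=> triY i lid; rewrite mulmxBr mul_mx_scalar.
apply: addmx_sub; first exact: triY.
by rewrite eqmx_opp scalemx_sub // (submx_trans (addsmxSr _ _) (addsmxSl _ _)).
Qed.

Lemma tridiagonal_of_lowering (Y : 'M_n) (mu : nat -> F) :
  lowering Y mu -> tridiagonal Y.
Proof.
move=> lowY j ljd; rewrite -[Y](subrK (mu j)%:M) mulmxDr mul_mx_scalar.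
apply: addmx_sub; first by apply: submx_trans (lowY j ljd) _; rewrite -addsmxA addsmxSl.
by rewrite scalemx_sub // (submx_trans (addsmxSr _ _) (addsmxSl _ _)).
Qed.

Lemma tridiagonal_of_raising (Y : 'M_n) (mu : nat -> F) :
  raising Y mu -> tridiagonal Y.
Proof.
move=> raiseY j ljd; rewrite -[Y](subrK (mu j)%:M) mulmxDr mul_mx_scalar.
apply: addmx_sub; first by apply: submx_trans (raiseY j ljd) _; rewrite addsmxSr.
by rewrite scalemx_sub // (submx_trans (addsmxSr _ _) (addsmxSl _ _)).
Qed.

Lemma tridiagonalZ (Y : 'M_n) (s : F) : tridiagonal Y -> tridiagonal (s *: Y).
Proof. by move=> triY i lid; rewrite -scalemxAr scalemx_sub // triY. Qed.

Lemma raisingZ (X : 'M_n) (lam : nat -> F) (s : F) :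
  raising X lam -> raising (s *: X) (fun i => s * lam i).
Proof.
by move=> raiseX i lid; rewrite -scale_scalar_mx -scalerBr -scalemxAr scalemx_sub ?raiseX.
Qed.

Lemma loweringZ (X : 'M_n) (lam : nat -> F) (s : F) :
  lowering X lam -> lowering (s *: X) (fun i => s * lam i).
Proof.
by move=> lowX i lid; rewrite -scale_scalar_mx -scalerBr -scalemxAr scalemx_sub ?lowX.
Qed.

Lemma sumsmx_near_sub k : (k <= d)%N ->
  (\sum_(j < d.+1 | (k.-1 <= j)%N && (j <= k.+1)%N) f j <=
     (if k is k'.+1 then f k' else 0) + f k + (if (k < d)%N then f k.+1 else 0))%MS.
Proof.
move=> lkd; apply/sumsmx_subP => j /andP[lkj ljk].
have ljd : (j <= d)%N by rewrite -ltnS ltn_ord.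
case: (ltngtP j k) => [ltjk|ltkj|->]; last exact: submx_trans (addsmxSr _ _) (addsmxSl _ _).
- case: k ltjk lkj {lkd ljk} => // k ltjk lkj; have -> : j = k :> nat by lia.
  by rewrite -addsmxA addsmxSl.
- have ltkd : (k < d)%N by lia.
  have -> : j = k.+1 :> nat by lia.
  by rewrite ltkd addsmxSr.
Qed.

End Flags.

Section DirectDecomposition.
Variables (F : fieldType) (n d : nat) (W : nat -> 'M[F]_n).
Hypothesis dirW : mxdirect (\sum_(i < d.+1) W i).

Lemma mxdirect_sub2_eq0 i j m (S : 'M[F]_(m, n)) :
  (i <= d)%N -> (j <= d)%N -> i != j -> (S <= W i)%MS -> (S <= W j)%MS -> S = 0.
Proof.
move=> lid ljd nij SWi SWj; apply/eqP; rewrite -submx0.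
have /mxdirect_sumsP/(_ (Ordinal (lid : (i < d.+1)%N)) isT) <- := dirW.
rewrite sub_capmx SWi (submx_trans SWj) //.
by apply: (sumsmx_sup (Ordinal (ljd : (j < d.+1)%N))); rewrite //= eq_sym.
Qed.

Lemma mxdirect_sub_sumsI (P Q : pred nat) m (S : 'M[F]_(m, n)) :
  (S <= \sum_(k < d.+1 | P k) W k)%MS -> (S <= \sum_(k < d.+1 | Q k) W k)%MS ->
  (S <= \sum_(k < d.+1 | P k && Q k) W k)%MS.
Proof.
move=> /sub_sumsmxP[u Su] /sub_sumsmxP[v Sv].
pose cu (k : 'I_d.+1) := if P k then u k *m W k else 0.
pose cv (k : 'I_d.+1) := if Q k then v k *m W k else 0.
have cuW k : (cu k <= W k)%MS by rewrite /cu; case: (P k); rewrite ?sub0mx ?submxMl.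
have cvW k : (cv k <= W k)%MS by rewrite /cv; case: (Q k); rewrite ?sub0mx ?submxMl.
have Scu : S = \sum_k cu k.
  rewrite Su [RHS](bigID (fun k : 'I_d.+1 => P k)) /= [X in _ + X]big1 ?addr0.
    by apply: eq_bigr => k Pk; rewrite /cu Pk.
  by move=> k /negPf nPk; rewrite /cu nPk.
have Scv : S = \sum_k cv k.
  rewrite Sv [RHS](bigID (fun k : 'I_d.+1 => Q k)) /= [X in _ + X]big1 ?addr0.
    by apply: eq_bigr => k Qk; rewrite /cv Qk.
  by move=> k /negPf nQk; rewrite /cv nQk.
have [|S_ _ _ S_uniq] := sub_dsumsmx dirW (A := S).
  by rewrite Scu summx_sub_sums.
have cuv k : cu k = cv k by rewrite (S_uniq cu) // (S_uniq cv).
rewrite Scu (bigID (fun k : 'I_d.+1 => P k && Q k)) /= [X in _ + X]big1 ?addr0.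
  by apply: summx_sub_sums => k /andP[Pk _]; rewrite /cu Pk submxMl.
move=> k; rewrite negb_and => /orP[nPk|nQk]; first by rewrite /cu (negPf nPk).
by rewrite cuv /cv (negPf nQk).
Qed.

Hypothesis fullW : (1%:M <= \sum_(i < d.+1) W i)%MS.

Lemma sub_sumsmx_part (P : pred nat) (S T : 'M[F]_n) :
  (forall k, (k <= d)%N -> P k -> (W k <= S)%MS) ->
  (forall k, (k <= d)%N -> ~~ P k -> (W k <= T)%MS) ->
  (S :&: T = 0)%MS -> (S <= \sum_(k < d.+1 | P k) W k)%MS.
Proof.
move=> WS WT ST0.
set SP := (\sum_(k < d.+1 | P k) W k)%MS; set SN := (\sum_(k < d.+1 | ~~ P k) W k)%MS.
have SP_S : (SP <= S)%MS by apply/sumsmx_subP => k; apply: WS; rewrite -ltnS.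
have SN_T : (SN <= T)%MS by apply/sumsmx_subP => k; apply: WT; rewrite -ltnS.
have S_split : (S <= SP + SN)%MS.
  by have := submx_trans (submx1 S) fullW; rewrite (bigID (fun k : 'I_d.+1 => P k)).
(* Modular law: S = SP + (SN :&: S), and SN :&: S lies in S :&: T = 0. *)
apply: (submx_trans (B := ((SP + SN) :&: S)%MS)).
  by rewrite sub_capmx S_split submx_refl.
rewrite -(matrix_modl _ SP_S) addsmx_sub submx_refl /=.
have : (SN :&: S <= S :&: T)%MS.
  by rewrite sub_capmx capmxSr (submx_trans (capmxSl _ _) SN_T).
by rewrite ST0 submx0 => /eqP->; rewrite sub0mx.
Qed.

Variables (L U : nat -> 'M[F]_n).
Hypothesis W_flags : forall k, W k = (L k :&: U k)%MS.
Hypothesis L_mono : forall i j, (i <= j <= d)%N -> (L i <= L j)%MS.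
Hypothesis U_anti : forall i j, (i <= j <= d)%N -> (U j <= U i)%MS.

Lemma lower_flag_sub i : (i <= d)%N -> (L i <= \sum_(k < i.+1) W k)%MS.
Proof.
move=> lid; rewrite (big_ord_widen _ _ (lid : (i.+1 <= d.+1)%N)).
apply: (sub_sumsmx_part (P := fun k => (k < i.+1)%N)
  (T := if (i < d)%N then U i.+1 else 0)).
- move=> k lkd lki; rewrite W_flags; apply: submx_trans (capmxSl _ _) _.
  by apply: L_mono; lia.
- move=> k lkd; rewrite -leqNgt => ltik.
  have -> : (i < d)%N by apply: leq_trans lkd.
  rewrite W_flags; apply: submx_trans (capmxSr _ _) _.
  by apply: U_anti; lia.
case: ifP => ltid; last by rewrite capmx0.
apply: (mxdirect_sub2_eq0 (i := i) (j := i.+1)) => //; rewrite ?neq_ltn ?ltnSn //.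
  by rewrite W_flags capmxS // U_anti ?leqnSn.
by rewrite W_flags capmxS // L_mono ?leqnSn.
Qed.

Lemma upper_flag_sub i : (i <= d)%N -> (U i <= \sum_(i <= k < d.+1) W k)%MS.
Proof.
move=> lid; rewrite suf_ord.
apply: (sub_sumsmx_part (P := fun k => (i <= k)%N) (T := if i is i'.+1 then L i' else 0)).
- move=> k lkd lik; rewrite W_flags; apply: submx_trans (capmxSr _ _) _.
  by apply: U_anti; lia.
- move=> k lkd; rewrite -ltnNge => ltki.
  case: i lid ltki => // i lid ltki.
  rewrite W_flags; apply: submx_trans (capmxSl _ _) _.
  by apply: L_mono; lia.
case: i lid => [|i] lid; first by rewrite capmx0.
apply: (mxdirect_sub2_eq0 (i := i) (j := i.+1)) => //; rewrite ?neq_ltn ?ltnSn //.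
- exact: ltnW.
- by rewrite capmxC W_flags capmxS // U_anti ?leqnSn ?(ltnW lid).
- by rewrite capmxC W_flags capmxS // L_mono ?leqnSn.
Qed.

Lemma tridiagonal_of_flags (X : 'M[F]_n) :
  (forall k, (k < d)%N -> (L k *m X <= L k.+1)%MS) ->
  (forall k, (0 < k <= d)%N -> (U k *m X <= U k.-1)%MS) ->
  tridiagonal d W X.
Proof.
(* W k *m X lies in U k.-1 and in L k.+1, which meet in W k.-1 + W k + W k.+1. *)
move=> LX UX k lkd; apply: submx_trans _ (sumsmx_near_sub W lkd).
have WL : (W k <= L k)%MS by rewrite W_flags capmxSl.
have WU : (W k <= U k)%MS by rewrite W_flags capmxSr.
apply: (mxdirect_sub_sumsI (P := fun j => (k.-1 <= j)%N) (Q := fun j => (j <= k.+1)%N)).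
- case: k lkd WL WU => [|k] lkd _ WU.
    apply: submx_trans (submx1 _) (submx_trans fullW _).
    by apply/sumsmx_subP => j _; apply: (sumsmx_sup j).
  rewrite -suf_ord; apply: submx_trans (submxMr _ WU) _.
  exact: submx_trans (UX k.+1 lkd) (upper_flag_sub (ltnW lkd)).
- case: (ltngtP k d) lkd WL => // [ltkd|->] _ WL; last first.
    apply: submx_trans (submx1 _) (submx_trans fullW _).
    by apply/sumsmx_subP => j _; apply: (sumsmx_sup j) => //; apply: ltnW.
  rewrite -(big_ord_widen _ (fun j => W j) (ltkd : (k.+2 <= d.+1)%N)).
  apply: submx_trans (submxMr _ WL) _.
  exact: submx_trans (LX k ltkd) (lower_flag_sub ltkd).
Qed.

End DirectDecomposition.

Section Decompositions.
Variables (F : fieldType) (n d : nat) (W : nat -> 'M[F]_n).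
Hypothesis DW : is_decomposition d W.

Lemma decomposition_direct : mxdirect (\sum_(i < d.+1) W i).
Proof. by case: DW. Qed.

Lemma decomposition_spanning : (1%:M <= \sum_(i < d.+1) W i)%MS.
Proof. by case: DW => _ _ /andP[]. Qed.

End Decompositions.

Section ScalarDecomposition.
Variables (F : fieldType) (n d : nat) (W : nat -> 'M[F]_n) (c : nat -> F) (M : 'M[F]_n).

Lemma mulmx_acts_as_scalar : acts_as_scalar d W c M ->
  forall i, (i <= d)%N -> W i *m M = c i *: W i.
Proof.
move=> cM i lid; apply/row_matrixP => j.
by rewrite row_mul (cM i lid) ?row_sub // !rowE scalemxAr.
Qed.

Hypothesis fullW : (1%:M <= \sum_(i < d.+1) W i)%MS.
Hypothesis WM : forall i, (i <= d)%N -> W i *m M = c i *: W i.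
Hypothesis c_neq0 : forall i, (i <= d)%N -> c i != 0.

Lemma unitmx_scalar_decomposition : M \in unitmx.
Proof.
rewrite -row_full_unit -sub1mx; apply: submx_trans fullW _.
apply/sumsmx_subP => i _; have lid : (i <= d)%N by rewrite -ltnS.
have -> : W i = (c i)^-1 *: (W i *m M) by rewrite WM // scalerA mulVf ?scale1r ?c_neq0.
by rewrite scalemx_sub ?submxMl.
Qed.

Lemma mulmx_invmx_scalar i : (i <= d)%N -> W i *m invmx M = (c i)^-1 *: W i.
Proof.
move=> lid; have WMi : W i = c i *: (W i *m invmx M).
  by rewrite scalemxAl -WM // -mulmxA mulmxV ?mulmx1 ?unitmx_scalar_decomposition.
by rewrite {2}WMi scalerA mulVf ?scale1r ?c_neq0.
Qed.

End ScalarDecomposition.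

Definition qWeyl (F : fieldType) n (q : F) (X Y : 'M[F]_n) : Prop :=
  (q - q^-1)^-1 *: (q *: word [:: X; Y] - q^-1 *: word [:: Y; X]) = 1%:M.

Definition qSerre (F : fieldType) n (q : F) (X Y : 'M[F]_n) : Prop :=
  word [:: X; X; X; Y] - ((q ^+ 3 - q ^- 3) / (q - q^-1)) *: word [:: X; X; Y; X]
  + ((q ^+ 3 - q ^- 3) / (q - q^-1)) *: word [:: X; Y; X; X]
  - word [:: Y; X; X; X] = 0.

Section QRelations.
Variables (F : fieldType) (n : nat) (q : F).
Implicit Types (X Y : 'M[F]_n).

Lemma qWeylV X Y : qWeyl q^-1 X Y = qWeyl q Y X.
Proof.
rewrite /qWeyl invrK; have -> : q^-1 - q = - (q - q^-1) by rewrite opprB.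
by rewrite invrN scaleNr -scalerN opprB.
Qed.

Lemma qSerreV X Y : qSerre q^-1 X Y = qSerre q X Y.
Proof.
have qintV : (q^-1 ^+ 3 - q^-1 ^- 3) / (q^-1 - q^-1^-1) = (q ^+ 3 - q ^- 3) / (q - q^-1).
  by rewrite exprVn !invrK -[q ^- 3 - _]opprB -[q^-1 - q]opprB invrN mulrNN.
by rewrite /qSerre qintV.
Qed.

Hypothesis qq : q - q^-1 != 0.

Lemma q_neq0 : q != 0.
Proof. by apply: contraNneq qq => ->; rewrite invr0 subrr. Qed.

Section Blockwise.
Variables (d : nat) (W : nat -> 'M[F]_n) (X Y : 'M[F]_n) (c : nat -> F).
Hypothesis fullW : (1%:M <= \sum_(i < d.+1) W i)%MS.
Hypothesis WY : forall i, (i <= d)%N -> W i *m Y = c i *: W i.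

Lemma qWeyl_blockwise (lam : nat -> F) (N : nat -> 'M[F]_n) :
  (forall i, (i <= d)%N -> (W i *m (X - (lam i)%:M) <= N i)%MS) ->
  (forall i, (i <= d)%N -> N i *m Y = (q ^+ 2 * c i) *: N i) ->
  (forall i, (i <= d)%N -> c i * lam i = 1) ->
  qWeyl q X Y.
Proof.
move=> WX NY clam; rewrite /qWeyl /word /= !mul1mx.
apply: (eq_mulmx_spanning fullW) => i _; have lid : (i <= d)%N by rewrite -ltnS.
have /submxP[u Du] := WX i lid; set D := W i *m _ in Du.
have WiX : W i *m X = u *m N i + lam i *: W i.
  by rewrite -Du /D mulmxBr mul_mx_scalar subrK.
have WYX : W i *m (Y *m X) = c i *: (u *m N i) + W i.
  by rewrite mulmxA WY // -scalemxAl WiX scalerDr scalerA clam // scale1r.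
have WXY : W i *m (X *m Y) = (q ^+ 2 * c i) *: (u *m N i) + W i.
  rewrite mulmxA WiX mulmxDl -mulmxA NY // scalemxAr -scalemxAl WY // scalerA.
  by rewrite [lam i * _]mulrC clam // scale1r.
have qc : q^-1 * (q ^+ 2 * c i) = q * c i by rewrite expr2 -mulrA mulKf ?q_neq0.
rewrite mulmx1 -scalemxAr mulmxBr -!scalemxAr WYX WXY.
have -> : q *: (c i *: (u *m N i) + W i) - q^-1 *: ((q ^+ 2 * c i) *: (u *m N i) + W i)
    = (q - q^-1) *: W i.
  by rewrite !scalerDr !scalerA qc opprD addrACA subrr add0r -scalerBl.
by rewrite scalerA mulVf ?scale1r.
Qed.

Lemma qWeyl_raising (lam : nat -> F) :
  raising d W X lam -> (forall i, c i.+1 = q ^+ 2 * c i) ->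
  (forall i, (i <= d)%N -> c i * lam i = 1) -> qWeyl q X Y.
Proof.
move=> raiseX cS; apply: (qWeyl_blockwise raiseX) => i lid.
by case: ifP => ltid; rewrite ?mul0mx ?scaler0 // WY // cS.
Qed.

Lemma qWeyl_lowering (lam : nat -> F) :
  lowering d W X lam -> (forall i, c i = q ^+ 2 * c i.+1) ->
  (forall i, (i <= d)%N -> c i * lam i = 1) -> qWeyl q X Y.
Proof.
move=> lowX cS; apply: (qWeyl_blockwise lowX) => -[|i] lid.
  by rewrite mul0mx scaler0.
by rewrite WY ?(ltnW lid) // -cS.
Qed.

Lemma qSerre_tridiagonal : tridiagonal d W X ->
  (forall i, c i.+1 = q ^+ 2 * c i) -> qSerre q Y X.
Proof.
move=> triX cS; pose r := 1 + q ^+ 2 + q ^- 2.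
have q3E : (q ^+ 3 - q ^- 3) / (q - q^-1) = r.
  by apply: (mulIf qq); rewrite divfK // /r; field; rewrite q_neq0.
rewrite /qSerre q3E /word /= !mul1mx.
apply: (eq_mulmx_spanning fullW) => -[k lkd] _ /=.
have WYk := WY lkd; rewrite mulmx0.
(* P expands (Y - c k)(Y - q^2 c k)(Y - q^-2 c k); it kills W k and its neighbours. *)
pose P := Y *m Y *m Y - (r * c k) *: (Y *m Y) + (r * c k ^+ 2) *: Y - (c k ^+ 3)%:M.
have WP0 j : (j <= d)%N -> (c j - c k) * (c j - q ^+ 2 * c k) * (c j - q ^- 2 * c k) = 0 ->
    W j *m P = 0.
  move=> ljd root_cj; have WYj := WY ljd; rewrite -(scale0r (W j)) -root_cj.
  rewrite /P !mulmxDr !mulmxN -!scalemxAr !mulmxA mul_mx_scalar.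
  do 3! rewrite ?WYj -?scalemxAl.
  rewrite !scalerA -scalerBl -scalerDl -scalerBl; congr (_ *: _).
  by rewrite /r; field; rewrite q_neq0.
have -> : W k *m (X *m Y *m Y *m Y - r *: (Y *m X *m Y *m Y)
    + r *: (Y *m Y *m X *m Y) - Y *m Y *m Y *m X) = W k *m X *m P.
  rewrite /P !mulmxDr !mulmxN -!scalemxAr !mulmxA mul_mx_scalar.
  do 3! rewrite ?WYk -?scalemxAl.
  by rewrite !scalerA !exprS expr0 !mulr1 !mulrA.
apply/eqP; rewrite -submx0; apply: submx_trans (submxMr P (triX k lkd)) _.
rewrite addsmxMr addsmx_sub addsmxMr addsmx_sub -andbA; apply/and3P; split.
- case Ek: k => [|j]; first by rewrite mul0mx sub0mx.
  rewrite WP0 ?sub0mx //; first by lia.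
  by rewrite Ek cS mulKf ?expf_neq0 ?q_neq0 // subrr mulr0.
- by rewrite WP0 ?sub0mx // subrr !mul0r.
- case: ifP => ltkd; last by rewrite mul0mx sub0mx.
  by rewrite WP0 ?sub0mx // cS subrr mulr0 mul0r.
Qed.

End Blockwise.

Lemma qWeyl_eigenspace_shift X Y m (S : 'M[F]_(m, n)) (t : F) :
  qWeyl q X Y -> S *m X = t *: S -> t != 0 ->
  (S *m (Y - t^-1%:M) <= eigenspace X (q ^- 2 * t))%MS.
Proof.
rewrite /qWeyl /word /= !mul1mx => XY SX t0; apply/eigenspaceP.
have SYX : q *: (S *m Y *m X) = (q - q^-1) *: S + (q^-1 * t) *: (S *m Y).
  have := congr1 (fun M => (q - q^-1) *: (S *m M)) XY.
  rewrite /= -scalemxAr scalerA mulfV // scale1r mulmx1 mulmxBr -!scalemxAr !mulmxA SX.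
  by rewrite -scalemxAl scalerA => <-; rewrite subrK.
apply: (scalerI q_neq0).
have -> : q *: (S *m (Y - t^-1%:M) *m X) = (q^-1 * t) *: (S *m Y) - q^-1 *: S.
  rewrite mulmxBr mul_mx_scalar mulmxBl -scalemxAl SX scalerA mulVf // scale1r.
  rewrite scalerBr SYX addrAC -scalerBl.
  have -> : q - q^-1 - q = - q^-1 by rewrite addrAC subrr add0r.
  by rewrite scaleNr addrC.
rewrite scalerA mulmxBr mul_mx_scalar scalerBr scalerA.
have -> : q * (q ^- 2 * t) = q^-1 * t by field; rewrite q_neq0.
by rewrite -mulrA mulfV ?mulr1.
Qed.

End QRelations.

Lemma standard_ordering_eigenspace0 (F : fieldType) n (A As : 'M[F]_n) d th x :
  standard_ordering A As d th -> (forall i, (i <= d)%N -> x != th i) ->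
  eigenspace A x = 0.
Proof.
case=> _ _ th_onto _ x_new; apply/eqP; apply/negPn/negP => /th_onto[i lid xE].
by move: (x_new i lid); rewrite xE eqxx.
Qed.

Section QWeights.
Variables (F : fieldType) (q : F) (d : nat).
Hypothesis q0 : q != 0.

Definition qweight (i : nat) : F := q ^ (Posz (2 * i) - Posz d).

Lemma qweightE i : qweight i = q ^+ (2 * i) / q ^+ d.
Proof. by rewrite /qweight expfzDr // exprnN. Qed.

Lemma qweight_neq0 i : qweight i != 0.
Proof. by rewrite expfz_neq0. Qed.

Lemma qweightS i : qweight i.+1 = q ^+ 2 * qweight i.
Proof. by rewrite !qweightE mulnS exprD mulrA. Qed.

Lemma qweightV i : q ^ (Posz d - Posz (2 * i)) = (qweight i)^-1.
Proof. by rewrite /qweight invr_expz opprB. Qed.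

Lemma qweight_rev i : (i <= d)%N -> qweight (d - i) = (qweight i)^-1.
Proof.
move=> lid; have e : (2 * (d - i) + 2 * i = d + d)%N by lia.
by apply/eqP; rewrite !qweightE invf_div eqr_div ?expf_neq0 // -!exprD e.
Qed.

Lemma qweight_inj : (forall m, (0 < m)%N -> q ^+ m != 1) -> injective qweight.
Proof.
move=> q_nonroot i j; rewrite !qweightE => /(mulIf (invr_neq0 (expf_neq0 d q0))).
wlog lij : i j / (i <= j)%N => [hwlog|eq_ij].
  by case/orP: (leq_total i j) => /hwlog h // /esym/h.
apply/eqP; rewrite eqn_leq lij /=; apply: contraT; rewrite -ltnNge => ltij.
have /eqP[] := q_nonroot (2 * (j - i))%N ltac:(lia).
apply: (mulIf (expf_neq0 (2 * i) q0)); rewrite mul1r -exprD eq_ij.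
by congr (_ ^+ _); lia.
Qed.

End QWeights.

Lemma stablemxZ (F : fieldType) m n (V : 'M[F]_(m, n)) (f : 'M_n) (s : F) :
  stablemx V f -> stablemx V (s *: f).
Proof. by move=> Vf; rewrite -scalemxAr scalemx_sub. Qed.

Lemma irreducible_for_TD_pair (F : fieldType) n (A As : 'M[F]_n) (a ast : F) gens :
  a != 0 -> ast != 0 -> TD_pair A As ->
  a *: A \in gens -> ast *: As \in gens -> irreducible_for gens.
Proof.
move=> a0 ast0 [n0 _ _ _ irrA] Ag Asg; split => // W stableW; apply: irrA.
  by rewrite -(scalerK a0 A) stablemxZ ?stableW.
by rewrite -(scalerK ast0 As) stablemxZ ?stableW.
Qed.

Section Theorem13p2.
Variables (K : fieldType) (n : nat) (q : K) (A As B Bs Ks : 'M[K]_n) (d : nat)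
  (a ast b bst : K).
Hypothesis q0 : q != 0.
Hypothesis q_nonroot : forall m : nat, (0 < m)%N -> q ^+ m != 1.
Hypotheses (a0 : a != 0) (ast0 : ast != 0) (b0 : b != 0) (bst0 : bst != 0).

Local Notation Q := (qweight q d).

Definition th i := a * Q i.
Definition ths i := ast * q ^ (Posz d - Posz (2 * i)).
Definition EA j := eigenspace A (th j).
Definition EAs j := eigenspace As (ths j).

Local Notation H m := (\sum_(j < m.+1) EA j)%MS.
Local Notation G m := (\sum_(m <= j < d.+1) EA j)%MS.
Local Notation Hs m := (\sum_(j < m.+1) EAs j)%MS.
Local Notation Gs m := (\sum_(m <= j < d.+1) EAs j)%MS.

Definition W1 i := (Hs i :&: H (d - i))%MS.
Definition W2 i := (Gs (d - i) :&: G i)%MS.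
Definition W3 i := (Gs (d - i) :&: H (d - i))%MS.

Hypothesis std : standard_ordering A As d th.
Hypothesis stds : standard_ordering As A d ths.
Hypotheses (D1 : is_decomposition d W1) (D2 : is_decomposition d W2)
  (D3 : is_decomposition d W3).
Hypothesis B_W1 : acts_as_scalar d W1 (fun i => b * Q i) B.
Hypothesis Bs_W2 : acts_as_scalar d W2 (fun i => bst * q ^ (Posz d - Posz (2 * i))) Bs.
Hypothesis Ks_W3 : acts_as_scalar d W3 Q Ks.

Local Notation y0p := (a^-1 *: A).
Local Notation y1p := (ast^-1 *: As).
Local Notation y0m := (bst^-1 *: Bs).
Local Notation y1m := (b^-1 *: B).
Local Notation k1 := (invmx Ks).

Lemma W1_spanning : (1%:M <= \sum_(i < d.+1) W1 i)%MS.
Proof. exact: decomposition_spanning D1. Qed.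
Lemma W2_spanning : (1%:M <= \sum_(i < d.+1) W2 i)%MS.
Proof. exact: decomposition_spanning D2. Qed.
Lemma W3_spanning : (1%:M <= \sum_(i < d.+1) W3 i)%MS.
Proof. exact: decomposition_spanning D3. Qed.

Lemma qsubV_neq0 : q - q^-1 != 0.
Proof.
apply: contraNneq (q_nonroot (isT : (0 < 2)%N)) => /eqP.
by rewrite subr_eq0 => /eqP qE; rewrite expr2 {2}qE divff.
Qed.

Lemma qVsubV_neq0 : q^-1 - q^-1^-1 != 0.
Proof. by rewrite invrK -opprB oppr_eq0 qsubV_neq0. Qed.

Lemma Q_neq0 i : Q i != 0. Proof. exact: qweight_neq0. Qed.
Lemma Q_inj : injective Q. Proof. exact: qweight_inj. Qed.
Lemma QS i : Q i.+1 = q ^+ 2 * Q i. Proof. exact: qweightS. Qed.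
Lemma thsE i : ths i = ast * (Q i)^-1. Proof. by rewrite /ths qweightV. Qed.

Lemma EA_eigen j : EA j *m A = th j *: EA j. Proof. exact/eigenspaceP. Qed.
Lemma EAs_eigen j : EAs j *m As = ths j *: EAs j. Proof. exact/eigenspaceP. Qed.

Lemma EA_y0p j : EA j *m y0p = Q j *: EA j.
Proof. by rewrite -scalemxAr EA_eigen scalerA mulKf. Qed.

Lemma EAs_y1p j : EAs j *m y1p = (Q j)^-1 *: EAs j.
Proof. by rewrite -scalemxAr EAs_eigen scalerA thsE mulKf. Qed.

Lemma tridiagonal_As_EA : tridiagonal d EA As. Proof. by case: std. Qed.
Lemma tridiagonal_A_EAs : tridiagonal d EAs A. Proof. by case: stds. Qed.

Lemma spanning_EA : (1%:M <= \sum_(i < d.+1) EA i)%MS.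
Proof.
apply: submx_trans W1_spanning _.
apply/sumsmx_subP => i _; apply: submx_trans (capmxSr _ _) _.
by apply: pre_mono; apply: leq_subr.
Qed.

Lemma spanning_EAs : (1%:M <= \sum_(i < d.+1) EAs i)%MS.
Proof.
apply: submx_trans W1_spanning _.
apply/sumsmx_subP => i _; apply: submx_trans (capmxSl _ _) _.
by apply: pre_mono; rewrite -ltnS ltn_ord.
Qed.

Lemma eigenspaceA_eq0 x :
  (forall i, (i <= d)%N -> x != a * Q i) -> eigenspace A x = 0.
Proof. exact: standard_ordering_eigenspace0 std. Qed.

Lemma eigenspaceAs_eq0 x :
  (forall i, (i <= d)%N -> x != ast * (Q i)^-1) -> eigenspace As x = 0.
Proof.
by move=> x_new; apply: standard_ordering_eigenspace0 stds _ => i lid; rewrite thsE x_new.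
Qed.

Lemma EA_next j :
  (eigenspace A (a * (q ^+ 2 * Q j)) <= if (j < d)%N then EA j.+1 else 0)%MS.
Proof.
rewrite -QS; case: ifP => // /negbT; rewrite -leqNgt => ldj.
rewrite eigenspaceA_eq0 // => i lid; apply: contraTneq lid => /(mulfI a0)/Q_inj <-.
by rewrite -ltnNge ltnS.
Qed.

Lemma Q_pred0_neq i : q ^- 2 * Q 0 != Q i.
Proof.
apply/eqP => /(congr1 ( *%R (q ^+ 2))); rewrite mulVKf ?expf_neq0 // -QS.
by move/Q_inj.
Qed.

Lemma EA_prev j :
  (eigenspace A (a * (q ^- 2 * Q j)) <= if j is j'.+1 then EA j' else 0)%MS.
Proof.
case: j => [|j]; last by rewrite QS mulKf ?expf_neq0.
by rewrite eigenspaceA_eq0 // => i _; apply: contra_neq (Q_pred0_neq i); apply: mulfI.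
Qed.

Lemma EAs_next j :
  (eigenspace As (ast * (q ^- 2 * (Q j)^-1)) <= if (j < d)%N then EAs j.+1 else 0)%MS.
Proof.
rewrite -invfM -QS; case: ifP => [_|/negbT]; first by rewrite /EAs thsE.
rewrite -leqNgt => ldj; rewrite eigenspaceAs_eq0 // => i lid.
apply: contraTneq lid => /(mulfI ast0)/invr_inj/Q_inj <-.
by rewrite -ltnNge ltnS.
Qed.

Lemma EAs_prev j :
  (eigenspace As (ast * (q ^+ 2 * (Q j)^-1)) <= if j is j'.+1 then EAs j' else 0)%MS.
Proof.
case: j => [|j]; last by rewrite QS invfM mulVKf ?expf_neq0 // /EAs thsE.
rewrite eigenspaceAs_eq0 // => i _; apply: contra_neq (Q_pred0_neq i).
by move/(mulfI ast0)/(congr1 GRing.inv); rewrite invfM !invrK.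
Qed.

Lemma W3_raising_A : raising d W3 A (fun i => th (d - i)).
Proof.
move=> i lid; rewrite /W3.
apply: submx_trans (mulmx_capmx_sub
  (suf_mulmx_tridiagonal _ (tridiagonal_shift _ tridiagonal_A_EAs))
  (pre_mulmx_eigen (leq_subr i d) (fun j _ => EA_eigen j))) _.
case: (ltnP i d) => [ltid|ldi].
  have -> : (d - i = (d - i.+1).+1)%N by lia.
  exact: submx_refl.
have -> : (d - i = 0)%N by lia.
by rewrite capmx0 sub0mx.
Qed.

Lemma W3_lowering_As : lowering d W3 As (fun i => ths (d - i)).
Proof.
move=> i lid; rewrite /W3.
apply: submx_trans (mulmx_capmx_sub (suf_mulmx_eigen (d - i) (fun j _ => EAs_eigen j))
  (pre_mulmx_tridiagonal (tridiagonal_shift _ tridiagonal_As_EA) (leq_subr i d))) _.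
case: i lid => [|i] lid; first by rewrite subn0 suf_eq0 cap0mx sub0mx.
have -> : ((d - i.+1).+1 = d - i)%N by lia.
exact: submx_refl.
Qed.

Lemma W2_raising_A : raising d W2 A th.
Proof.
move=> i lid; rewrite /W2.
apply: submx_trans (mulmx_capmx_sub
  (suf_mulmx_tridiagonal (d - i) (tridiagonal_shift _ tridiagonal_A_EAs))
  (suf_mulmx_eigen i (fun j _ => EA_eigen j))) _.
case: (ltnP i d) => [ltid|ldi].
  have -> : ((d - i).-1 = d - i.+1)%N by lia.
  exact: submx_refl.
have -> : i = d by lia.
by rewrite suf_eq0 capmx0 sub0mx.
Qed.

Lemma W2_lowering_As : lowering d W2 As (fun i => ths (d - i)).
Proof.
move=> i lid; rewrite /W2.
apply: submx_trans (mulmx_capmx_sub (suf_mulmx_eigen (d - i) (fun j _ => EAs_eigen j))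
  (suf_mulmx_tridiagonal i (tridiagonal_shift _ tridiagonal_As_EA))) _.
case: i lid => [|i] lid; first by rewrite subn0 suf_eq0 cap0mx sub0mx.
have -> : ((d - i.+1).+1 = d - i)%N by lia.
exact: submx_refl.
Qed.

Lemma W1_raising_A : raising d W1 A (fun i => th (d - i)).
Proof.
move=> i lid; rewrite /W1.
apply: submx_trans (mulmx_capmx_sub
  (pre_mulmx_tridiagonal (tridiagonal_shift _ tridiagonal_A_EAs) lid)
  (pre_mulmx_eigen (leq_subr i d) (fun j _ => EA_eigen j))) _.
case: (ltnP i d) => [ltid|ldi].
  have -> : (d - i = (d - i.+1).+1)%N by lia.
  exact: submx_refl.
have -> : (d - i = 0)%N by lia.
by rewrite capmx0 sub0mx.
Qed.

Lemma W1_lowering_As : lowering d W1 As ths.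
Proof.
move=> i lid; rewrite /W1.
apply: submx_trans (mulmx_capmx_sub (pre_mulmx_eigen lid (fun j _ => EAs_eigen j))
  (pre_mulmx_tridiagonal (tridiagonal_shift _ tridiagonal_As_EA) (leq_subr i d))) _.
case: i lid => [|i] lid; first by rewrite cap0mx sub0mx.
have -> : ((d - i.+1).+1 = d - i)%N by lia.
exact: submx_refl.
Qed.

Lemma W3_Ks i : (i <= d)%N -> W3 i *m Ks = Q i *: W3 i.
Proof. exact: (mulmx_acts_as_scalar Ks_W3). Qed.

Lemma Ks_unit : Ks \in unitmx.
Proof. exact: unitmx_scalar_decomposition W3_spanning W3_Ks (fun i _ => Q_neq0 i). Qed.

Lemma W3_k1 i : (i <= d)%N -> W3 i *m k1 = (Q i)^-1 *: W3 i.
Proof. exact: (mulmx_invmx_scalar W3_spanning W3_Ks (fun i _ => Q_neq0 i)). Qed.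

Lemma W1_y1m i : (i <= d)%N -> W1 i *m y1m = Q i *: W1 i.
Proof. by move=> lid; rewrite -scalemxAr (mulmx_acts_as_scalar B_W1) // scalerA mulKf. Qed.

Lemma W2_y0m i : (i <= d)%N -> W2 i *m y0m = (Q i)^-1 *: W2 i.
Proof.
by move=> lid; rewrite -scalemxAr (mulmx_acts_as_scalar Bs_W2) // scalerA qweightV mulKf.
Qed.

Lemma Qinv_qS i : (Q i)^-1 = q ^+ 2 * (Q i.+1)^-1.
Proof. by rewrite QS invfM mulVKf ?expf_neq0. Qed.

Lemma QinvS i : (Q i.+1)^-1 = q^-1 ^+ 2 * (Q i)^-1.
Proof. by rewrite QS invfM exprVn. Qed.

Lemma qWeyl_y0p_Ks : qWeyl q y0p Ks.
Proof.
apply: (qWeyl_raising qsubV_neq0 W3_spanning W3_Ks (raisingZ a^-1 W3_raising_A) QS).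
by move=> i lid; rewrite /th mulKf // qweight_rev // mulfV ?Q_neq0.
Qed.

Lemma qWeyl_y1p_k1 : qWeyl q y1p k1.
Proof.
apply: (qWeyl_lowering qsubV_neq0 W3_spanning W3_k1
  (loweringZ ast^-1 W3_lowering_As) Qinv_qS).
by move=> i lid; rewrite thsE mulKf // qweight_rev // invrK mulVf ?Q_neq0.
Qed.

Lemma qWeyl_y0p_y1m : qWeyl q y0p y1m.
Proof.
apply: (qWeyl_raising qsubV_neq0 W1_spanning W1_y1m (raisingZ a^-1 W1_raising_A) QS).
by move=> i lid; rewrite /th mulKf // qweight_rev // mulfV ?Q_neq0.
Qed.

Lemma qWeyl_y1p_y0m : qWeyl q y1p y0m.
Proof.
apply: (qWeyl_lowering qsubV_neq0 W2_spanning W2_y0m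
  (loweringZ ast^-1 W2_lowering_As) Qinv_qS).
by move=> i lid; rewrite thsE mulKf // qweight_rev // invrK mulVf ?Q_neq0.
Qed.

Lemma qWeyl_y0m_y0p : qWeyl q y0m y0p.
Proof.
rewrite -qWeylV.
apply: (qWeyl_raising qVsubV_neq0 W2_spanning W2_y0m (raisingZ a^-1 W2_raising_A) QinvS).
by move=> i lid; rewrite /th mulKf // mulVf ?Q_neq0.
Qed.

Lemma qWeyl_y1m_y1p : qWeyl q y1m y1p.
Proof.
rewrite -qWeylV.
apply: (qWeyl_lowering qVsubV_neq0 W1_spanning W1_y1m (loweringZ ast^-1 W1_lowering_As)).
  by move=> i; rewrite QS exprVn mulKf ?expf_neq0.
by move=> i lid; rewrite thsE mulKf // mulfV ?Q_neq0.
Qed.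

Lemma EA_lowering_qWeyl Y : qWeyl q y0p Y -> lowering d EA Y (fun j => (Q j)^-1).
Proof.
move=> y0pY j _; apply: submx_trans (EA_prev j).
rewrite -[a]invrK; apply: eigenspaceZ_sub; first by rewrite invr_neq0.
exact: (qWeyl_eigenspace_shift qsubV_neq0 y0pY (EA_y0p j) (Q_neq0 j)).
Qed.

Lemma EA_raising_qWeyl Y : qWeyl q Y y0p -> raising d EA Y (fun j => (Q j)^-1).
Proof.
rewrite -qWeylV => y0pY j _; apply: submx_trans (EA_next j).
rewrite -[a]invrK -[q ^+ 2]invrK -exprVn.
apply: eigenspaceZ_sub; first by rewrite invr_neq0.
exact: (qWeyl_eigenspace_shift qVsubV_neq0 y0pY (EA_y0p j) (Q_neq0 j)).
Qed.

Lemma EAs_raising_qWeyl Y : qWeyl q y1p Y -> raising d EAs Y Q.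
Proof.
move=> y1pY j _; apply: submx_trans (EAs_next j).
rewrite -[ast]invrK; apply: eigenspaceZ_sub; first by rewrite invr_neq0.
have := qWeyl_eigenspace_shift qsubV_neq0 y1pY (EAs_y1p j) (invr_neq0 (Q_neq0 j)).
by rewrite invrK.
Qed.

Lemma EAs_lowering_qWeyl Y : qWeyl q Y y1p -> lowering d EAs Y Q.
Proof.
rewrite -qWeylV => y1pY j _; apply: submx_trans (EAs_prev j).
rewrite -[ast]invrK -[q ^+ 2]invrK -exprVn.
apply: eigenspaceZ_sub; first by rewrite invr_neq0.
have := qWeyl_eigenspace_shift qVsubV_neq0 y1pY (EAs_y1p j) (invr_neq0 (Q_neq0 j)).
by rewrite invrK.
Qed.

Lemma W3_lower_flag i : (i <= d)%N -> (Gs (d - i) <= \sum_(k < i.+1) W3 k)%MS.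
Proof.
apply: (lower_flag_sub (decomposition_direct D3) W3_spanning (fun k => erefl (W3 k)))
  => [k l /andP[lkl _]|k l /andP[lkl _]]; first by apply: suf_anti; lia.
by apply: pre_mono; lia.
Qed.

Lemma W3_upper_flag i : (i <= d)%N -> (H (d - i) <= \sum_(i <= k < d.+1) W3 k)%MS.
Proof.
apply: (upper_flag_sub (decomposition_direct D3) W3_spanning (fun k => erefl (W3 k)))
  => [k l /andP[lkl _]|k l /andP[lkl _]]; first by apply: suf_anti; lia.
by apply: pre_mono; lia.
Qed.

Lemma W2_lowering_Ks : lowering d W2 Ks Q.
Proof.
move=> i lid; rewrite /W2.
have GsK :
    (Gs (d - i) *m (Ks - (Q i)%:M) <= if i is i'.+1 then Gs (d - i') else 0)%MS.
  apply: submx_trans (submxMr _ (W3_lower_flag lid)) _.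
  apply: submx_trans (pre_mulmx_eigen lid W3_Ks) _.
  case: i lid => [|i] lid; first exact: sub0mx.
  by apply: pre_sub => k lki; apply: submx_trans (capmxSl _ _) _; apply: suf_anti; lia.
have triK := tridiagonal_of_lowering (EA_lowering_qWeyl qWeyl_y0p_Ks).
apply: submx_trans
  (mulmx_capmx_sub GsK (suf_mulmx_tridiagonal i (tridiagonal_shift _ triK))) _.
by case: i {lid GsK}; rewrite ?cap0mx ?sub0mx.
Qed.

Lemma W1_raising_k1 : raising d W1 k1 (fun i => (Q i)^-1).
Proof.
move=> i lid; rewrite /W1.
have HK1 :
    (H (d - i) *m (k1 - ((Q i)^-1)%:M) <= if (i < d)%N then H (d - i.+1) else 0)%MS.
  apply: submx_trans (submxMr _ (W3_upper_flag lid)) _.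
  apply: submx_trans (suf_mulmx_eigen i W3_k1) _.
  case: (ltnP i d) => [ltid|ldi]; last first.
    have -> : i = d by lia.
    by rewrite suf_eq0 sub0mx.
  apply: suf_sub => k /andP[lik lkd]; apply: submx_trans (capmxSr _ _) _.
  by apply: pre_mono; lia.
have triK1 := tridiagonal_of_raising (EAs_raising_qWeyl qWeyl_y1p_k1).
apply: submx_trans (mulmx_capmx_sub
  (pre_mulmx_tridiagonal (tridiagonal_shift _ triK1) lid) HK1) _.
by case: ifP; rewrite ?capmx0 ?sub0mx.
Qed.

Lemma qWeyl_Ks_y0m : qWeyl q Ks y0m.
Proof.
apply: (qWeyl_lowering qsubV_neq0 W2_spanning W2_y0m W2_lowering_Ks Qinv_qS) => i lid.
by rewrite mulVf ?Q_neq0.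
Qed.

Lemma qWeyl_k1_y1m : qWeyl q k1 y1m.
Proof.
apply: (qWeyl_raising qsubV_neq0 W1_spanning W1_y1m W1_raising_k1 QS) => i lid.
by rewrite mulfV ?Q_neq0.
Qed.

Lemma tridiagonal_y1m_W2 : tridiagonal d W2 y1m.
Proof.
apply: (tridiagonal_of_flags (decomposition_direct D2) W2_spanning (fun k => erefl (W2 k))).
- by move=> i j /andP[lij _]; apply: suf_anti; lia.
- by move=> i j /andP[lij _]; apply: suf_anti.
- move=> k ltkd; have -> : (d - k.+1 = (d - k).-1)%N by lia.
  exact: suf_mulmx_tridiagonal (tridiagonal_of_lowering (EAs_lowering_qWeyl qWeyl_y1m_y1p)).
- move=> k _.
  exact: suf_mulmx_tridiagonal (tridiagonal_of_lowering (EA_lowering_qWeyl qWeyl_y0p_y1m)).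
Qed.

Lemma tridiagonal_y0m_W1 : tridiagonal d W1 y0m.
Proof.
apply: (tridiagonal_of_flags (decomposition_direct D1) W1_spanning (fun k => erefl (W1 k))).
- by move=> i j /andP[lij _]; apply: pre_mono.
- by move=> i j /andP[lij _]; apply: pre_mono; lia.
- move=> k ltkd; apply: pre_mulmx_tridiagonal (ltnW ltkd).
  exact: tridiagonal_of_raising (EAs_raising_qWeyl qWeyl_y1p_y0m).
- move=> k /andP[k0 lkd]; have -> : (d - k.-1 = (d - k).+1)%N by lia.
  apply: pre_mulmx_tridiagonal (leq_subr k d).
  exact: tridiagonal_of_raising (EA_raising_qWeyl qWeyl_y0m_y0p).
Qed.

Lemma qSerre_y0p_y1p : qSerre q y0p y1p.
Proof.
exact: (qSerre_tridiagonal qsubV_neq0 spanning_EA (fun j _ => EA_y0p j)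
  (tridiagonalZ _ tridiagonal_As_EA) QS).
Qed.

Lemma qSerre_y1p_y0p : qSerre q y1p y0p.
Proof.
rewrite -qSerreV.
exact: (qSerre_tridiagonal qVsubV_neq0 spanning_EAs (fun j _ => EAs_y1p j)
  (tridiagonalZ _ tridiagonal_A_EAs) QinvS).
Qed.

Lemma qSerre_y0m_y1m : qSerre q y0m y1m.
Proof.
rewrite -qSerreV.
exact: (qSerre_tridiagonal qVsubV_neq0 W2_spanning W2_y0m tridiagonal_y1m_W2 QinvS).
Qed.

Lemma qSerre_y1m_y0m : qSerre q y1m y0m.
Proof. exact: (qSerre_tridiagonal qsubV_neq0 W1_spanning W1_y1m tridiagonal_y0m_W1 QS). Qed.

Lemma U_relations : Urep q y0p y1p y0m y1m Ks k1 k1 Ks.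
Proof.
have KK1 : Ks *m k1 = 1%:M by rewrite mulmxV ?Ks_unit.
have K1K : k1 *m Ks = 1%:M by rewrite mulVmx ?Ks_unit.
have k1k0 : word [:: k1; Ks] = 1%:M by rewrite /word /= !mul1mx KK1.
rewrite /Urep; cbv beta zeta; split.
- split; first by case; rewrite /word /= !mul1mx ?KK1 ?K1K.
  by move=> X _; rewrite /word /= !mul1mx -mulmxA K1K mulmx1 mul1mx.
- by case; [exact: qWeyl_y1p_k1 | exact: qWeyl_y0p_Ks].
- split; first by case; [exact: qWeyl_k1_y1m | exact: qWeyl_Ks_y0m].
  by case; [exact: qWeyl_y1m_y1p | exact: qWeyl_y0m_y0p].
- by rewrite k1k0; case; case => //= _; [exact: qWeyl_y1p_y0m | exact: qWeyl_y0p_y1m].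
- move=> y i j [->|->]; case: i; case: j => //= _.
  + exact: qSerre_y1p_y0p.
  + exact: qSerre_y0p_y1p.
  + exact: qSerre_y1m_y0m.
  + exact: qSerre_y0m_y1m.
Qed.

End Theorem13p2.

Unset Implicit Arguments.

Theorem theorem13p2 (K : closedFieldType) (n : nat) (q : K)
  (A As B Bs Ks : 'M[K]_n) (d : nat) (a ast b bst : K) :
  q != 0 ->
  (forall m : nat, (0 < m)%N -> q ^+ m != 1) ->
  a != 0 -> ast != 0 -> b != 0 -> bst != 0 ->
  TD_pair A As ->
  let th := fun i : nat => a * q ^ (Posz (2 * i) - Posz d) in
  let ths := fun i : nat => ast * q ^ (Posz d - Posz (2 * i)) in
  standard_ordering A As d th ->
  standard_ordering As A d ths ->
  let Vs := fun j : nat => eigenspace A (th j) in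
  let Vss := fun j : nat => eigenspace As (ths j) in
  (* (V*_0+...+V*_i) /\ (V_0+...+V_{d-i}) *)
  let W1 := fun i : nat =>
    ((\sum_(j < i.+1) Vss j) :&: (\sum_(j < (d - i).+1) Vs j))%MS in
  (* (V*_{d-i}+...+V*_d) /\ (V_i+...+V_d) *)
  let W2 := fun i : nat =>
    ((\sum_(d - i <= j < d.+1) Vss j) :&: (\sum_(i <= j < d.+1) Vs j))%MS in
  (* (V*_{d-i}+...+V*_d) /\ (V_0+...+V_{d-i}) *)
  let W3 := fun i : nat =>
    ((\sum_(d - i <= j < d.+1) Vss j) :&: (\sum_(j < (d - i).+1) Vs j))%MS in
  is_decomposition d W1 -> is_decomposition d W2 -> is_decomposition d W3 ->
  acts_as_scalar d W1 (fun i => b * q ^ (Posz (2 * i) - Posz d)) B ->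
  acts_as_scalar d W2 (fun i => bst * q ^ (Posz d - Posz (2 * i))) Bs ->
  acts_as_scalar d W3 (fun i => q ^ (Posz (2 * i) - Posz d)) Ks ->
  Urep q (a^-1 *: A) (ast^-1 *: As) (bst^-1 *: Bs) (b^-1 *: B)
         Ks (invmx Ks) (invmx Ks) Ks /\
  irreducible_for [:: a^-1 *: A; ast^-1 *: As; bst^-1 *: Bs; b^-1 *: B;
                      Ks; invmx Ks; invmx Ks; Ks].
Proof.
move=> q0 q_nonroot a0 ast0 b0 bst0 TD th ths std stds Vs Vss W1 W2 W3.
move=> D1 D2 D3 B_W1 Bs_W2 Ks_W3; split.
  exact: (U_relations q0 q_nonroot a0 ast0 b0 bst0 std stds D1 D2 D3 B_W1 Bs_W2 Ks_W3).
apply: (irreducible_for_TD_pair (invr_neq0 a0) (invr_neq0 ast0) TD).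
  exact: mem_head.
by rewrite !inE eqxx orbT.
Qed.
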